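(* Let $l\le d/2$ and let $\mathbf{N}=(N_1,\dots,N_{l+1})$ be a POVM on $\mathbb{C}^d$ with $N_i=A_i\ket{\psi_i}\bra{\psi_i}$ for $i\in[l]$, where $\ket{\psi_i}$ are unit vectors and $A_i\ge0$. Let $W=\mathrm{span}_{\mathbb{C}}\{\ket{\psi_i}:i\in[l]\}$, $W^\perp$ its orthogonal complement with orthogonal projector $\mathbb{P}_{W^\perp}$, and $|W^\perp|$ its dimension. Define $F_i=A_i\ket{\psi_i}\bra{\psi_i}+\frac{1-A_i}{|W^\perp|}\mathbb{P}_{W^\perp}$ for $i\in[l]$ and $F_{l+1}=\mathbb{I}_d-\sum_{i=1}^lF_i$. Then $\mathbf{F}=(F_1,\dots,F_{l+1})$ is a POVM and $\mathbf{F}\in\mathrm{SP}(d)$.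
   Context: A POVM on $\mathbb{C}^d$ is a tuple of positive semidefinite operators summing to $\mathbb{I}_d$; projective if $M_iM_j=\delta_{ij}M_i$. A classical post-processing (numbers $q_{i|j}\ge0$, $\sum_iq_{i|j}=1$) maps effects $M_j$ to $\sum_jq_{i|j}M_j$. $\mathrm{SP}(d)$ is the set of finite effect-wise convex combinations of post-processed projective measurements on $\mathbb{C}^d$. *)

(* Complex scalars: an arbitrary numClosedFieldType C
   (e.g. algC, or complex R for R : rcfType), which covers C = complex numbers. *)
From HB Require Import structures.
From mathcomp Require Import all_boot all_order all_algebra.
From mathcomp Require Import sesquilinear spectral.
Set Implicit Arguments. Unset Strict Implicit. Unset Printing Implicit Defensive.
Import Order.TTheory GRing.Theory Num.Theory Num.Def.
Local Open Scope ring_scope.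
Local Open Scope sesquilinear_scope.

(* CONVENTION: vectors of C^d are ROW vectors 'rV[C]_d and an operator is a
   matrix M acting by right multiplication v |-> v *m M (the convention of
   mathcomp's spectral.v, where proj_ortho lives). Inner product
   <u,v> = (u *m v^t* ) 0 0 (linear in u, antilinear in v). *)

Section QDefs.
Variable C : numClosedFieldType.

Definition ketbra d (psi : 'rV[C]_d) : 'M[C]_d := psi^t* *m psi.

Definition unit_vec d (psi : 'rV[C]_d) : Prop := (psi *m psi^t*) 0 0 = 1.

Definition psdmx d (M : 'M[C]_d) : Prop :=
  M^t* = M /\ forall v : 'rV[C]_d, 0 <= (v *m M *m v^t*) 0 0.

Definition POVM d n (M : 'I_n -> 'M[C]_d) : Prop :=
  (forall i, psdmx (M i)) /\ \sum_(i < n) M i = 1%:M.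

Definition projective d n (M : 'I_n -> 'M[C]_d) : Prop :=
  forall i j, M i *m M j = if i == j then M i else 0.

(* SP(d): finite effect-wise convex combinations of classical
   post-processings of projective measurements. *)
Definition SP d k (F : 'I_k -> 'M[C]_d) : Prop :=
  exists (m : nat) (p : 'I_m -> C) (ns : 'I_m -> nat)
         (P : forall t : 'I_m, 'I_(ns t) -> 'M[C]_d)
         (q : forall t : 'I_m, 'I_k -> 'I_(ns t) -> C),
    (forall t, 0 <= p t) /\ \sum_(t < m) p t = 1 /\
    (forall t, POVM (P t) /\ projective (P t)) /\
    (forall t i j, 0 <= q t i j) /\
    (forall t j, \sum_(i < k) q t i j = 1) /\
    (forall i, F i = \sum_(t < m) p t *: \sum_(j < ns t) q t i j *: P t j).

(* W = span{psi_i}: row space of the matrix with rows psi_i *)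
Definition Wmx d l (psi : 'I_l -> 'rV[C]_d) : 'M[C]_(l, d) :=
  \matrix_(i < l) psi i.
Definition Wperp d l (psi : 'I_l -> 'rV[C]_d) : 'M[C]_d :=
  orthomx conjC 1%:M (Wmx psi).
Definition P_Wperp d l (psi : 'I_l -> 'rV[C]_d) : 'M[C]_d :=
  proj_ortho (Wperp psi).
Definition dim_Wperp d l (psi : 'I_l -> 'rV[C]_d) : nat := \rank (Wperp psi).

Definition Fi d l (A : 'I_l -> C) (psi : 'I_l -> 'rV[C]_d) (i : 'I_l) : 'M[C]_d :=
  A i *: ketbra (psi i) + ((1 - A i) / (dim_Wperp psi)%:R) *: P_Wperp psi.

(* F = (F_1, ..., F_l, F_{l+1}), outcome l+1 being ord_max *)
Definition Fpovm d l (A : 'I_l -> C) (psi : 'I_l -> 'rV[C]_d) (i : 'I_l.+1) : 'M[C]_d :=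
  match unlift ord_max i with
  | Some j => Fi A psi j
  | None => 1%:M - \sum_(j < l) Fi A psi j
  end.

End QDefs.

From HB Require Import structures.
From mathcomp Require Import all_boot all_order all_algebra.
From mathcomp Require Import sesquilinear spectral zify.
Set Implicit Arguments. Unset Strict Implicit. Unset Printing Implicit Defensive.
Import Order.TTheory GRing.Theory Num.Theory Num.Def.
Local Open Scope ring_scope.
Local Open Scope sesquilinear_scope.

(* Let V be the matrix with rows sqrt(A_i) psi_i, so that N_{l+1} = 1 - V^* V.
   Positivity of N_{l+1} forces V V^* <= 1, hence 1 - V V^* = G G^* for some G,
   which we pad to r := |W^perp| >= l columns.  With E an isometry onto W^perp
   (so V E^* = 0), every unitary U of C^r yields an isometry V + G U E, and the
   rank-one projectors onto its rows, completed by 1 minus their sum, form a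
   projective measurement (a Naimark dilation of N).  Averaging over the group
   of signed cyclic shifts U, a unitary 1-design, kills the cross terms and
   replaces G^* e_i e_i^* G by its trace (1 - A_i) / r times the identity, so
   outcome i of the average is A_i |psi_i><psi_i| + (1 - A_i)/r P_{W^perp} = F_i:
   F is a uniform mixture of projective measurements. *)

Lemma sum_mulrn_eq (V : nmodType) (I : finType) (F : I -> V) j :
  \sum_i F i *+ (i == j) = F j.
Proof. by under eq_bigr do rewrite mulrb; rewrite -big_mkcond big_pred1_eq. Qed.

Section ConjugateTranspose.
Variable C : numClosedFieldType.

Lemma trmxC_mul m n p (X : 'M[C]_(m, n)) (Y : 'M[C]_(n, p)) :
  (X *m Y)^t* = Y^t* *m X^t*.
Proof. by rewrite trmx_mul map_mxM. Qed.

Lemma trmxCD m n (X Y : 'M[C]_(m, n)) : (X + Y)^t* = X^t* + Y^t*.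
Proof. by rewrite linearD map_mxD. Qed.

Lemma trmxCB m n (X Y : 'M[C]_(m, n)) : (X - Y)^t* = X^t* - Y^t*.
Proof. by rewrite linearB map_mxB. Qed.

Lemma trmxCZ m n a (X : 'M[C]_(m, n)) : (a *: X)^t* = a^* *: X^t*.
Proof. by rewrite linearZ map_mxZ. Qed.

Lemma trmxC1 n : (1%:M : 'M[C]_n)^t* = 1%:M.
Proof. by rewrite trmx1 map_mx1. Qed.

Lemma trmxC0 m n : (0 : 'M[C]_(m, n))^t* = 0.
Proof. by rewrite trmx0 map_mx0. Qed.

Lemma trmxC_sum m n (I : finType) (F : I -> 'M[C]_(m, n)) :
  (\sum_i F i)^t* = \sum_i (F i)^t*.
Proof.
apply/matrixP => a b; rewrite !mxE !summxE rmorph_sum; apply: eq_bigr => i _.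
by rewrite !mxE.
Qed.

Lemma dotmx_ge0 n (w : 'rV[C]_n) : 0 <= (w *m w^t*) 0 0.
Proof. by rewrite -dotmxE dnorm_ge0. Qed.

Lemma row_mul_trmxC m n (Y : 'M[C]_(m, n)) i j :
  row i Y *m (row j Y)^t* = ((Y *m Y^t*) i j)%:M.
Proof.
apply/matrixP => a b; rewrite !ord1 !mxE eqxx mulr1n.
by apply: eq_bigr => k _; rewrite !mxE.
Qed.

Lemma gram_rows m n (Y : 'M[C]_(m, n)) :
  Y^t* *m Y = \sum_i (row i Y)^t* *m row i Y.
Proof.
apply/matrixP => a b; rewrite summxE !mxE; apply: eq_bigr => i _.
by rewrite !mxE big_ord1 !mxE.
Qed.

End ConjugateTranspose.

Section PositiveSemidefinite.
Variable C : numClosedFieldType.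

Lemma psdmx_gram m n (X : 'M[C]_(m, n)) : psdmx (X *m X^t*).
Proof.
split; first by rewrite trmxC_mul trmxCK.
by move=> v; rewrite !mulmxA -mulmxA -trmxC_mul dotmx_ge0.
Qed.

Lemma psdmx_proj n (P : 'M[C]_n) : P^t* = P -> P *m P = P -> psdmx P.
Proof. by move=> hermP idemP; rewrite -idemP -{2}hermP; exact: psdmx_gram. Qed.

Lemma psdmx_sum_scale n (T : finType) (p : C) (M : T -> 'M[C]_n) :
  0 <= p -> (forall t, psdmx (M t)) -> psdmx (\sum_t p *: M t).
Proof.
move=> p_ge0 psdM; split.
  rewrite trmxC_sum; apply: eq_bigr => t _.
  by rewrite trmxCZ geC0_conj // (psdM t).1.
move=> v; rewrite mulmx_sumr mulmx_suml summxE; apply: sumr_ge0 => t _.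
by rewrite -scalemxAr -scalemxAl mxE mulr_ge0 // (psdM t).2.
Qed.

Lemma conj_diag_factor m n (U : 'M[C]_(m, n)) (mu : 'rV[C]_m) :
  (forall a, 0 <= mu 0 a) ->
  exists R : 'M[C]_(n, m), R *m R^t* = U^t* *m diag_mx mu *m U.
Proof.
move=> mu_ge0; pose rt := \row_a sqrtC (mu 0 a).
have rt_real : map_mx conjC rt = rt.
  by apply/rowP => a; rewrite !mxE geC0_conj // sqrtC_ge0.
exists (U^t* *m diag_mx rt).
rewrite trmxC_mul trmxCK tr_diag_mx map_diag_mx rt_real mulmxA.
rewrite -[_ *m diag_mx rt *m _]mulmxA mulmx_diag; congr (_ *m diag_mx _ *m _).
apply/rowP => a.
by rewrite !mxE -expr2 sqrtCK.
Qed.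

Section GramSpectrum.
Variables (m n : nat) (X : 'M[C]_(m, n)).
Let B := X *m X^t*.
Let U := spectralmx B.
Let lam := spectral_diag B.

Lemma gram_spectral : B = U^t* *m diag_mx lam *m U.
Proof.
have /hermitian_normalmx/orthomx_spectralP {1}-> : B \is hermsymmx.
  by apply/is_hermitianmxP; rewrite expr0 scale1r /B trmxC_mul trmxCK.
by rewrite invmx_unitary ?spectral_unitarymx.
Qed.

Lemma spectral_gram_diagE : U *m B *m U^t* = diag_mx lam.
Proof.
have Uu : U \is unitarymx by exact: spectral_unitarymx.
by rewrite {1}gram_spectral !mulmxA (unitarymxP Uu) mul1mx mulmxtVK.
Qed.

(* For w := row a (U X), the eigenvalue lam_a is |w|^2 and lam_a^2 is |w X^*|^2,
   so psd-ness of 1 - X^* X at w gives lam_a^2 <= lam_a. *)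
Lemma spectral_gram_bounds : psdmx (1%:M - X^t* *m X) ->
  forall a, 0 <= lam 0 a <= 1.
Proof.
move=> [_ psdXX] a.
have Uu : U \is unitarymx by exact: spectral_unitarymx.
pose w := row a (U *m X).
have normw : (w *m w^t*) 0 0 = lam 0 a.
  rewrite row_mul_trmxC mxE eqxx mulr1n trmxC_mul !mulmxA -[U *m X *m _]mulmxA.
  by rewrite -/B spectral_gram_diagE mxE eqxx mulr1n.
have normwX : (w *m X^t* *m (w *m X^t*)^t*) 0 0 = lam 0 a ^+ 2.
  rewrite -row_mul -mulmxA -/B row_mul_trmxC mxE eqxx mulr1n trmxC_mul.
  have -> : U *m B *m (B^t* *m U^t*) = (U *m B *m U^t*) *m (U *m B *m U^t*).
    by rewrite /B trmxC_mul trmxCK !mulmxA (mulmxKtV (U *m X *m X^t*) Uu).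
  by rewrite spectral_gram_diagE mulmx_diag !mxE eqxx mulr1n expr2.
have lam_ge0 : 0 <= lam 0 a by rewrite -normw dotmx_ge0.
have := psdXX w; rewrite mulmxBr mulmx1 mulmxBl.
have -> : w *m (X^t* *m X) *m w^t* = w *m X^t* *m (w *m X^t*)^t*.
  by rewrite trmxC_mul trmxCK !mulmxA.
rewrite mxE [X in _ + X]mxE normw normwX subr_ge0 lam_ge0 expr2 /= => lam2_le.
have [->|lam_neq0] := eqVneq (lam 0 a) 0; first exact: ler01.
have lam_gt0 : 0 < lam 0 a by rewrite lt_def lam_neq0.
by rewrite -(ler_pM2r lam_gt0) mul1r.
Qed.

End GramSpectrum.

Lemma psdmx_compl_factor m n (X : 'M[C]_(m, n)) : psdmx (1%:M - X^t* *m X) ->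
  exists R : 'M[C]_m, R *m R^t* = 1%:M - X *m X^t*.
Proof.
move=> /spectral_gram_bounds lam_bounds.
set U := spectralmx (X *m X^t*); set lam := spectral_diag (X *m X^t*).
have [|R HR] := @conj_diag_factor _ _ U (const_mx 1 - lam).
  by move=> a; rewrite !mxE subr_ge0; case/andP: (lam_bounds a).
exists R; rewrite HR gram_spectral -/U -/lam linearB /= diag_const_mx.
rewrite mulmxBr mulmx1 mulmxBl; congr (_ - _).
by rewrite -[U^t* *m U]mul1mx mulmxA (mulmxKtV 1%:M (spectral_unitarymx _)).
Qed.

End PositiveSemidefinite.

Section Completion.
Variables (C : numClosedFieldType) (d l : nat).

(* [Fpovm A psi] is [completion (Fi A psi)] up to conversion. *)
Definition completion (F : 'I_l -> 'M[C]_d) (j : 'I_l.+1) : 'M[C]_d :=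
  if unlift ord_max j is Some i then F i else 1%:M - \sum_i F i.

Lemma widen_lift (i : 'I_l) : widen_ord (leqnSn l) i = lift ord_max i.
Proof. by apply: val_inj; rewrite /= /bump leqNgt ltn_ord. Qed.

Lemma completion_lift F i : completion F (lift ord_max i) = F i.
Proof. by rewrite /completion liftK. Qed.

Lemma completion_max F : completion F ord_max = 1%:M - \sum_i F i.
Proof. by rewrite /completion unlift_none. Qed.

Lemma sum_completion F : \sum_j completion F j = 1%:M.
Proof.
rewrite big_ord_recr /= completion_max.
by under eq_bigr do rewrite widen_lift completion_lift; rewrite addrC subrK.
Qed.

Lemma completion_eq F (G : 'I_l.+1 -> 'M[C]_d) :
  \sum_j G j = 1%:M -> (forall i, G (lift ord_max i) = F i) ->
  forall j, completion F j = G j.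
Proof.
move=> sumG GF j; case: (unliftP ord_max j) => [i ->|->].
  by rewrite completion_lift GF.
rewrite completion_max -sumG big_ord_recr /=.
by under eq_bigr do rewrite widen_lift GF; rewrite addrC addrK.
Qed.

Lemma completion_projective_povm F :
  (forall i, (F i)^t* = F i) ->
  (forall i i', F i *m F i' = if i == i' then F i else 0) ->
  POVM (completion F) /\ projective (completion F).
Proof.
move=> hermF orthoF; set S := \sum_i F i.
have FS i : F i *m S = F i.
  rewrite mulmx_sumr (bigD1 i) //= orthoF eqxx big1 ?addr0 // => i' /negbTE ne.
  by rewrite orthoF eq_sym ne.
have SF i : S *m F i = F i.
  rewrite mulmx_suml (bigD1 i) //= orthoF eqxx big1 ?addr0 // => i' /negbTE ne.
  by rewrite orthoF ne.
have SS : S *m S = S by rewrite mulmx_suml; apply: eq_bigr => i _; rewrite FS.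
have projF : projective (completion F).
  move=> j j'; case: (unliftP ord_max j) => [i ->|->];
    case: (unliftP ord_max j') => [i' ->|->];
    rewrite ?completion_lift ?completion_max.
  - by rewrite (inj_eq lift_inj) orthoF.
  - by rewrite eq_sym (negbTE (neq_lift _ _)) mulmxBr (mulmx1 (F i)) -/S FS subrr.
  - by rewrite (negbTE (neq_lift _ _)) mulmxBl (mul1mx (F i')) -/S SF subrr.
  - by rewrite eqxx -/S mulmxBr !mulmxBl !mul1mx mulmx1 SS subrr subr0.
have hermC j : (completion F j)^t* = completion F j.
  case: (unliftP ord_max j) => [i ->|->]; rewrite ?completion_lift ?completion_max //.
  by rewrite trmxCB trmxC1 trmxC_sum; under eq_bigr do rewrite hermF.
split=> //; split; last exact: sum_completion.
by move=> j; apply: psdmx_proj; rewrite ?hermC // projF eqxx.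
Qed.

Lemma rows_projective_povm (Phi : 'M[C]_(l, d)) : Phi \is unitarymx ->
  let F i := (row i Phi)^t* *m row i Phi in
  POVM (completion F) /\ projective (completion F).
Proof.
move=> /unitarymxP PhiU F; apply: completion_projective_povm => [i|i i'].
  by rewrite /F trmxC_mul trmxCK.
rewrite /F mulmxA -[_ *m row i' Phi^t*]mulmxA row_mul_trmxC PhiU mxE mul_mx_scalar.
by case: eqP => [->|_]; rewrite ?scale1r // scale0r mul0mx.
Qed.

End Completion.

Section UniformMixture.
Variables (C : numClosedFieldType) (d k : nat) (T : finType).
Variable P : T -> 'I_k -> 'M[C]_d.
Hypothesis T_gt0 : (0 < #|T|)%N.
Hypothesis P_projective : forall t, POVM (P t) /\ projective (P t).

Lemma sum_uniform_mixture : \sum_j #|T|%:R^-1 *: \sum_t P t j = 1%:M.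
Proof.
rewrite -scaler_sumr exchange_big /=.
under eq_bigr do rewrite (P_projective _).1.2.
by rewrite sumr_const -scaler_nat scalerA mulVf ?scale1r // pnatr_eq0 -lt0n.
Qed.

Lemma uniform_mixture_SP (F : 'I_k -> 'M[C]_d) :
  (forall i, F i = #|T|%:R^-1 *: \sum_t P t i) -> POVM F /\ SP F.
Proof.
move=> defF; have p_ge0 : 0 <= #|T|%:R^-1 :> C by rewrite invr_ge0 ler0n.
split.
  split; last by under eq_bigr do rewrite defF; exact: sum_uniform_mixture.
  move=> i; rewrite defF scaler_sumr.
  by apply: (@psdmx_sum_scale _ _ _ _ (P^~ i)) => // t; case: (P_projective t) => [[]].
exists #|T|, (fun _ => #|T|%:R^-1), (fun _ => k), (fun t => P (enum_val t)),
  (fun _ i j => (i == j)%:R).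
split=> //; split.
  by rewrite sumr_const card_ord -[LHS]mulr_natr mulVf // pnatr_eq0 -lt0n.
split; first by move=> t; exact: P_projective.
split; first by move=> *; exact: ler0n.
split; first by move=> _ j; exact: (sum_mulrn_eq (fun=> 1)).
move=> i; rewrite defF scaler_sumr (big_enum_val (A := T)) /=.
apply: eq_bigr => t _; congr (_ *: _).
by under eq_bigr do rewrite scaler_nat eq_sym; rewrite sum_mulrn_eq.
Qed.

End UniformMixture.

Lemma completion0_SP (C : numClosedFieldType) d (F : 'I_0 -> 'M[C]_d) :
  POVM (completion F) /\ SP (completion F).
Proof.
apply: (@uniform_mixture_SP _ _ _ 'I_1 (fun=> completion F)) => [|_|j].
- by rewrite card_ord.
- by apply: completion_projective_povm; case.
- by rewrite big_ord1 card_ord invr1 scale1r.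
Qed.

Section SignedShifts.
Variables (C : numClosedFieldType) (K : nat).
Local Notation signs := {ffun 'I_K.+1 -> bool}.

Definition sgn (s : signs) a : C := (-1) ^+ s a.

Definition flip_sign a (s : signs) : signs := [ffun x => (x == a) (+) s x].

Lemma flip_signK a : involutive (flip_sign a).
Proof. by move=> s; apply/ffunP => x; rewrite !ffunE addbA addbb. Qed.

Lemma sgn_flip a s b : sgn (flip_sign a s) b = (-1) ^+ (b == a) * sgn s b.
Proof. by rewrite /sgn ffunE signr_addb. Qed.

Lemma sgnK s a : sgn s a * sgn s a = 1.
Proof. by rewrite /sgn -signr_addb addbb. Qed.

Lemma sum_flip_odd (F : signs -> C) a :
  (forall s, F (flip_sign a s) = - F s) -> \sum_s F s = 0.
Proof.
move=> Fodd; apply/eqP; rewrite -[_ == 0](mulrn_eq0 _ 2) mulr2n.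
rewrite {1}(reindex_inj (can_inj (flip_signK a))) /=.
by under eq_bigr do rewrite Fodd; rewrite sumrN addNr.
Qed.

Lemma sum_sgnM a b : \sum_s sgn s a * sgn s b = #|signs|%:R *+ (a == b).
Proof.
have [<-|/negbTE ab] := eqVneq a b.
  by under eq_bigr do rewrite sgnK; rewrite sumr_const.
rewrite mulr0n; apply: (sum_flip_odd (a := a)) => s.
by rewrite !sgn_flip eqxx eq_sym ab expr1 expr0 mul1r mulN1r mulNr.
Qed.

Lemma sum_sgn a : \sum_s sgn s a = 0.
Proof.
by apply: (sum_flip_odd (a := a)) => s; rewrite sgn_flip eqxx expr1 mulN1r.
Qed.

Definition signed_shift (t : signs * 'I_K.+1) : 'M[C]_K.+1 :=
  \matrix_(a, b) (sgn t.1 a *+ (b == a + t.2)).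

Lemma signed_shift_unitary t : signed_shift t \is unitarymx.
Proof.
apply/unitarymxP/matrixP => a a'; rewrite !mxE.
under eq_bigr do rewrite !mxE rmorphMn mulrnAr mulrnAl.
rewrite sum_mulrn_eq /sgn rmorph_sign -!/(sgn _ _) (inj_eq (addIr _)) eq_sym.
by case: eqP => [->|_]; rewrite ?sgnK ?mulr0n.
Qed.

Lemma sum_signed_shift : \sum_t signed_shift t = 0.
Proof.
apply/matrixP => a b; rewrite summxE mxE.
under eq_bigr do rewrite mxE.
rewrite -(pair_bigA _ (fun s c => sgn s a *+ (b == a + c))) exchange_big /=.
by apply: big1 => c _; rewrite sumrMnl sum_sgn mul0rn.
Qed.

Lemma signed_shift_conjE t (Y : 'M[C]_K.+1) a b :
  ((signed_shift t)^t* *m Y *m signed_shift t) a b =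
  sgn t.1 (a - t.2) * sgn t.1 (b - t.2) * Y (a - t.2) (b - t.2).
Proof.
have shiftE (x y : 'I_K.+1) : (x == y + t.2) = (y == x - t.2).
  by rewrite [RHS]eq_sym subr_eq.
rewrite mxE; under eq_bigr => i _ do rewrite !mxE shiftE mulrnAr.
rewrite sum_mulrn_eq.
under eq_bigr => j _ do rewrite !mxE rmorphMn /sgn rmorph_sign -/(sgn _ _) shiftE mulrnAl.
by rewrite sum_mulrn_eq mulrAC.
Qed.

(* Signs kill the off-diagonal part of [Y], shifts average its diagonal. *)
Lemma signed_shift_twirl (Y : 'M[C]_K.+1) :
  \sum_t (signed_shift t)^t* *m Y *m signed_shift t =
  (#|signs|%:R * \tr Y) *: 1%:M.
Proof.
apply/matrixP => a b; rewrite summxE !mxE.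
under eq_bigr do rewrite signed_shift_conjE.
rewrite -(pair_bigA _ (fun s c => sgn s (a - c) * sgn s (b - c) * Y (a - c) (b - c))).
rewrite exchange_big /=.
under eq_bigr do rewrite -mulr_suml sum_sgnM (inj_eq (addIr _)).
have [<-|_] := eqVneq a b; last first.
  by rewrite mulr0; apply: big1 => c _; rewrite mulr0n mul0r.
by rewrite mulr1 mulr1n -mulr_sumr [\tr Y](reindex_inj (subrI a)).
Qed.

End SignedShifts.

Section Dilation.
Variables (C : numClosedFieldType) (d l k : nat).
Variables (V : 'M[C]_(l, d)) (G : 'M[C]_(l, k.+1)) (E : 'M[C]_(k.+1, d)).
Hypothesis E_unitary : E \is unitarymx.
Hypothesis VE : V *m E^t* = 0.
Hypothesis GG : G *m G^t* = 1%:M - V *m V^t*.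
Local Notation T := ({ffun 'I_k.+1 -> bool} * 'I_k.+1)%type.
Local Notation M := (signed_shift C).

Definition dilation (t : T) : 'M[C]_(l, d) := V + G *m M t *m E.

Lemma dilation_unitary t : dilation t \is unitarymx.
Proof.
have EV : E *m V^t* = 0 by rewrite -[E]trmxCK -trmxC_mul VE trmxC0.
apply/unitarymxP; rewrite /dilation trmxCD !trmxC_mul mulmxDl !mulmxDr !mulmxA.
rewrite VE !mul0mx addr0 -[G *m M t *m E *m V^t*]mulmxA EV mulmx0 add0r.
by rewrite (mulmxtVK _ E_unitary) (mulmxtVK _ (signed_shift_unitary _ _)) GG addrC subrK.
Qed.

Lemma mean_dilation_rank1 i :
  #|{: T}|%:R^-1 *: \sum_t (row i (dilation t))^t* *m row i (dilation t) =
  (row i V)^t* *m row i V + ((1 - (V *m V^t*) i i) / k.+1%:R) *: (E^t* *m E).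
Proof.
set v := row i V; set g := row i G.
have expand t : (row i (dilation t))^t* *m row i (dilation t) =
    v^t* *m v + (v^t* *m g *m M t *m E + E^t* *m ((M t)^t* *m (g^t* *m v)))
    + E^t* *m ((M t)^t* *m (g^t* *m g) *m M t) *m E.
  rewrite /dilation linearD /= !row_mul -/v -/g trmxCD !trmxC_mul.
  by rewrite mulmxDl !mulmxDr !mulmxA !addrA.
under eq_bigr do rewrite expand.
rewrite !big_split /= sumr_const.
have sumM_l : \sum_t v^t* *m g *m M t *m E = 0.
  by rewrite -mulmx_suml -mulmx_sumr sum_signed_shift mulmx0 mul0mx.
have sumM_r : \sum_t E^t* *m ((M t)^t* *m (g^t* *m v)) = 0.
  by rewrite -mulmx_sumr -mulmx_suml -trmxC_sum sum_signed_shift trmxC0 mul0mx mulmx0.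
have twirl : \sum_t E^t* *m ((M t)^t* *m (g^t* *m g) *m M t) *m E =
    (#|{: {ffun 'I_k.+1 -> bool}}|%:R * (1 - (V *m V^t*) i i)) *: (E^t* *m E).
  rewrite -mulmx_suml -mulmx_sumr signed_shift_twirl mxtrace_mulC /mxtrace big_ord1.
  rewrite row_mul_trmxC GG !mxE eqxx !mulr1n.
  by rewrite -scalemxAr mulmx1 -scalemxAl.
have signs_neq0 : (#|{: {ffun 'I_k.+1 -> bool}}|%:R : C) != 0.
  by rewrite pnatr_eq0 card_ffun card_bool card_ord expn_eq0.
have k_neq0 : (k.+1%:R : C) != 0 by rewrite pnatr_eq0.
rewrite sumM_l sumM_r twirl !addr0 card_prod card_ord scalerDr -scaler_nat natrM.
rewrite !scalerA mulVf ?mulf_neq0 // scale1r; congr (_ + _ *: _).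
by rewrite invfM mulrACA mulVf // mul1r mulrC.
Qed.

Lemma dilation_mixture_SP (F : 'I_l -> 'M[C]_d) :
  (forall i, F i = (row i V)^t* *m row i V +
                   ((1 - (V *m V^t*) i i) / k.+1%:R) *: (E^t* *m E)) ->
  POVM (completion F) /\ SP (completion F).
Proof.
move=> defF.
pose P t := completion (fun i => (row i (dilation t))^t* *m row i (dilation t)).
have P_proj t : POVM (P t) /\ projective (P t).
  exact/rows_projective_povm/dilation_unitary.
have T_gt0 : (0 < #|{: T}|)%N by apply/card_gt0P; exists ([ffun=> false], ord0).
apply: (uniform_mixture_SP T_gt0 P_proj) => j.
apply: (completion_eq (G := fun j => #|{: T}|%:R^-1 *: \sum_t P t j)) => [|i].
  exact: sum_uniform_mixture.
rewrite /P; under eq_bigr do rewrite completion_lift.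
by rewrite mean_dilation_rank1 defF.
Qed.

End Dilation.

Section WperpFrame.
Variable C : numClosedFieldType.

Lemma pid_mx_unitary m n : (m <= n)%N -> (pid_mx m : 'M[C]_(m, n)) \is unitarymx.
Proof.
move=> le_mn; apply/unitarymxP.
by rewrite tr_pid_mx map_pid_mx mul_pid_mx minnn (minn_idPr le_mn) pid_mx_1.
Qed.

Lemma unitarymx_proj_ortho m p n (E : 'M[C]_(m, n)) (U : 'M[C]_(p, n)) :
  E \is unitarymx -> (E :=: U)%MS -> E^t* *m E = proj_ortho U.
Proof.
move=> Eu EU; set P := proj_ortho U.
have PE : P *m (E^t* *m E) = P.
  have /submxP[Y ->] : (P <= E)%MS by rewrite EU -[P]mul1mx proj_ortho_sub.
  by rewrite mulmxA (mulmxtVK _ Eu).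
have PcE : (1%:M - P) *m (E^t* *m E) = 0.
  have : (1%:M - P <= orthomx conjC 1%:M E)%MS.
    by rewrite (eqmx_ortho _ EU) -{1}[P]mul1mx proj_ortho_compl_sub.
  by move/orthomx1P; rewrite mulmxA => ->; rewrite mul0mx.
by rewrite -[LHS]mul1mx -[1%:M](subrK P) mulmxDl PE PcE add0r.
Qed.

Variables (d l : nat) (psi : 'I_l -> 'rV[C]_d).

Lemma Wperp_frame : (0 < dim_Wperp psi)%N ->
  exists k (E : 'M[C]_(k.+1, d)), [/\ E \is unitarymx, E^t* *m E = P_Wperp psi,
    Wmx psi *m E^t* = 0 & dim_Wperp psi = k.+1].
Proof.
pose E := schmidt (row_base (Wperp psi)).
have EW : (E :=: Wperp psi)%MS.
  exact: eqmx_trans (eqmx_schmidt_free (row_base_free _)) (eq_row_base _).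
have Eu : E \is unitarymx by apply: schmidt_unitarymx; rewrite rank_leq_col.
have EP : E^t* *m E = P_Wperp psi by apply: unitarymx_proj_ortho.
have WE : Wmx psi *m E^t* = 0.
  have /orthomx1P EW0 : (E <= Wperp psi)%MS by rewrite EW.
  by rewrite -[Wmx psi]trmxCK -trmxC_mul EW0 trmxC0.
move: E Eu EP WE {EW}; rewrite /dim_Wperp.
by case: (\rank (Wperp psi)) => // k E *; exists k, E.
Qed.

End WperpFrame.

Section WeightedRows.
Variables (C : numClosedFieldType) (d l : nat).
Variables (A : 'I_l -> C) (psi : 'I_l -> 'rV[C]_d).
Hypothesis A_ge0 : forall i, 0 <= A i.

Definition scaled_Wmx : 'M[C]_(l, d) := diag_mx (\row_i sqrtC (A i)) *m Wmx psi.

Lemma row_scaled_Wmx i : row i scaled_Wmx = sqrtC (A i) *: psi i.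
Proof. by rewrite row_mul row_diag_mx -scalemxAl -rowE rowK mxE. Qed.

Lemma row_scaled_Wmx_rank1 i :
  (row i scaled_Wmx)^t* *m row i scaled_Wmx = A i *: ketbra (psi i).
Proof.
rewrite row_scaled_Wmx trmxCZ -scalemxAl -scalemxAr scalerA geC0_conj ?sqrtC_ge0 //.
by rewrite -expr2 sqrtCK.
Qed.

Lemma scaled_Wmx_gram_diag i :
  unit_vec (psi i) -> (scaled_Wmx *m scaled_Wmx^t*) i i = A i.
Proof.
move=> unit_psi.
have -> : (scaled_Wmx *m scaled_Wmx^t*) i i =
          (row i scaled_Wmx *m (row i scaled_Wmx)^t*) 0 0.
  by rewrite row_mul_trmxC [RHS]mxE mulr1n.
rewrite row_scaled_Wmx trmxCZ -scalemxAl -scalemxAr scalerA geC0_conj ?sqrtC_ge0 //.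
by rewrite -expr2 sqrtCK mxE unit_psi mulr1.
Qed.

Lemma scaled_Wmx_compl_psd (N : 'I_l.+1 -> 'M[C]_d) : POVM N ->
  (forall i, N (widen_ord (leqnSn l) i) = A i *: ketbra (psi i)) ->
  psdmx (1%:M - scaled_Wmx^t* *m scaled_Wmx).
Proof.
move=> [N_psd sumN] defN; suff <- : N ord_max = 1%:M - scaled_Wmx^t* *m scaled_Wmx by [].
rewrite -sumN big_ord_recr /= gram_rows.
by under eq_bigr do rewrite defN -row_scaled_Wmx_rank1; rewrite addrC addrK.
Qed.

End WeightedRows.

Theorem theorem6 (C : numClosedFieldType) (d l : nat) (A : 'I_l -> C)
    (psi : 'I_l -> 'rV[C]_d) (N : 'I_l.+1 -> 'M[C]_d) :
  (2 * l <= d)%N ->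
  (forall i, unit_vec (psi i)) ->
  (forall i, 0 <= A i) ->
  POVM N ->
  (forall i : 'I_l, N (widen_ord (leqnSn l) i) = A i *: ketbra (psi i)) ->
  POVM (Fpovm A psi) /\ SP (Fpovm A psi).
Proof.
move=> two_l_le_d unit_psi A_ge0 N_povm defN.
have [l0|l_gt0] := posnP l; first by subst l; exact: completion0_SP.
have [R HR] := psdmx_compl_factor (scaled_Wmx_compl_psd A_ge0 N_povm defN).
have l_le_dim : (l <= dim_Wperp psi)%N.
  have := rank_leq_row (Wmx psi); rewrite /dim_Wperp rank_ortho; lia.
have [k [E [Eu EP WE dimE]]] := Wperp_frame (leq_trans l_gt0 l_le_dim).
have l_le_k : (l <= k.+1)%N by rewrite -dimE.
have GG : (R *m pid_mx l) *m (R *m pid_mx l : 'M[C]_(l, k.+1))^t* =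
          1%:M - scaled_Wmx A psi *m (scaled_Wmx A psi)^t*.
  by rewrite trmxC_mul mulmxA (mulmxtVK _ (pid_mx_unitary _ l_le_k)).
have VE : scaled_Wmx A psi *m E^t* = 0 by rewrite /scaled_Wmx -mulmxA WE mulmx0.
apply: (dilation_mixture_SP Eu VE GG) => i.
by rewrite row_scaled_Wmx_rank1 // scaled_Wmx_gram_diag // EP /Fi dimE.
Qed.
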